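(* Let $S$ be an inverse semigroup with zero. Then there is an order isomorphism (with respect to inclusion) between the set of proper filters of $S$ and the set of prime filters of $\mathsf{D}(S)$.
   Context: The natural partial order is used; $X^{\uparrow}=\{s: x\le s \text{ for some } x\in X\}$, $X^{\downarrow}=\{s : s\le x \text{ for some } x\in X\}$. A filter in an inverse semigroup is a nonempty subset $F$ with $F=F^{\uparrow}$ such that for all $a,b\in F$ there is $c\in F$ with $c\le a,b$; it is proper if it does not contain zero. Elements $s,t$ are compatible if $s^{-1}t,st^{-1}$ are idempotents. $\mathsf{D}(S)$ is the set of subsets $\{a_1,\dots,a_m\}^{\downarrow}$ with $\{a_1,\dots,a_m\}$ a finite compatible subset of $S$, under subset multiplication, ordered by inclusion; it is a distributive inverse semigroup (joins of compatible elements are unions, and its zero is $\{0\}$). A prime filter of a distributive inverse semigroup is a proper filter $P$ such that whenever $a,b$ are compatible and $a\vee b\in P$, then $a\in P$ or $b\in P$. *)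

(* Subsets are predicates S -> Prop, compared with Leibniz equality. *)
From Stdlib Require Import List.
Import ListNotations.
Set Implicit Arguments.

Section InvSemigroup.
Variables (S : Type) (mul : S -> S -> S) (inv : S -> S) (z : S).

Definition inverse_semigroup_with_zero : Prop :=
  (forall x y w, mul x (mul y w) = mul (mul x y) w) /\
  (forall x, mul (mul x (inv x)) x = x) /\
  (forall x, mul (mul (inv x) x) (inv x) = inv x) /\
  (forall x y, mul (mul x y) x = x -> mul (mul y x) y = y -> y = inv x) /\
  (forall x, mul z x = z /\ mul x z = z).

Definition idem (e : S) : Prop := mul e e = e.

Definition nle (s t : S) : Prop := s = mul t (mul (inv s) s).

Definition upset (X : S -> Prop) : S -> Prop := fun s => exists x, X x /\ nle x s.
Definition downset (X : S -> Prop) : S -> Prop := fun s => exists x, X x /\ nle s x.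

Definition subset (A B : S -> Prop) : Prop := forall x, A x -> B x.

Definition filter (F : S -> Prop) : Prop :=
  (exists a, F a) /\ F = upset F /\
  (forall a b, F a -> F b -> exists c, F c /\ nle c a /\ nle c b).

Definition proper_filter (F : S -> Prop) : Prop := filter F /\ ~ F z.

Definition compatible (s t : S) : Prop := idem (mul (inv s) t) /\ idem (mul s (inv t)).

Definition inD (A : S -> Prop) : Prop :=
  exists l : list S, l <> [] /\
    (forall a b, In a l -> In b l -> compatible a b) /\
    A = downset (fun x => In x l).

Definition setmul (A B : S -> Prop) : S -> Prop :=
  fun x => exists a b, A a /\ B b /\ x = mul a b.
Definition setinv (A : S -> Prop) : S -> Prop := fun x => exists a, A a /\ x = inv a.
Definition setunion (A B : S -> Prop) : S -> Prop := fun x => A x \/ B x.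
Definition zeroD : S -> Prop := fun x => x = z.

Definition idemD (X : S -> Prop) : Prop := setmul X X = X.
Definition compatibleD (A B : S -> Prop) : Prop :=
  idemD (setmul (setinv A) B) /\ idemD (setmul A (setinv B)).

(* order on D(S) is inclusion; filters of D(S) are sets of elements of D(S) *)
Definition upsetD (P : (S -> Prop) -> Prop) : (S -> Prop) -> Prop :=
  fun A => inD A /\ exists B, P B /\ subset B A.

Definition filterD (P : (S -> Prop) -> Prop) : Prop :=
  (exists A, P A) /\ P = upsetD P /\
  (forall A B, P A -> P B -> exists C, P C /\ subset C A /\ subset C B).

Definition prime_filterD (P : (S -> Prop) -> Prop) : Prop :=
  filterD P /\ ~ P zeroD /\
  (forall A B, inD A -> inD B -> compatibleD A B ->
     P (setunion A B) -> P A \/ P B).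

End InvSemigroup.

From Pilot Require Import Defs.
From Stdlib Require Import List FunctionalExtensionality PropExtensionality.
Import ListNotations.
Set Implicit Arguments.
Unset Strict Implicit.

(* A proper filter F of S corresponds to the set of elements of D(S) that meet F, and a
   prime filter P of D(S) to the set of s whose principal ideal s^down lies in P. Both maps
   are monotone, and they are mutually inverse because of primeness: an element
   {a_1, ..., a_m}^down of P is the compatible join of the a_i^down, so some a_i^down
   already lies in P. Products in D(S) are computed elementwise, so compatibility and
   idempotency in D(S) reduce to the same notions in S through the natural order, which is
   compatible with multiplication and inversion. *)

Lemma pred_ext (T : Type) (A B : T -> Prop) : (forall x, A x <-> B x) -> A = B.
Proof.
  intros H. apply functional_extensionality. intros x. apply propositional_extensionality, H.
Qed.

Section InverseSemigroup.
Variables (S : Type) (mul : S -> S -> S) (inv : S -> S) (z : S).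
Hypothesis HS : inverse_semigroup_with_zero mul inv z.

Local Infix "**" := mul (at level 40, left associativity).
Local Notation idem := (idem mul).
Local Notation nle := (nle mul inv).
Local Notation downset := (downset mul inv).
Local Notation compatible := (compatible mul inv).
Local Notation inD := (inD mul inv).
Local Notation setmul := (setmul mul).
Local Notation setinv := (setinv inv).
Local Notation idemD := (idemD mul).
Local Notation compatibleD := (compatibleD mul inv).
Local Notation filter := (Defs.filter mul inv).
Local Notation proper_filter := (proper_filter mul inv z).
Local Notation filterD := (filterD mul inv).
Local Notation prime_filterD := (prime_filterD mul inv z).

Lemma mulA x y w : x ** (y ** w) = x ** y ** w.
Proof. destruct HS as (H & _). apply H. Qed.

Lemma mul_inv_mul x : x ** inv x ** x = x.
Proof. destruct HS as (_ & H & _). apply H. Qed.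

Lemma inv_mul_inv x : inv x ** x ** inv x = inv x.
Proof. destruct HS as (_ & _ & H & _). apply H. Qed.

Lemma inv_unique x y : x ** y ** x = x -> y ** x ** y = y -> y = inv x.
Proof. destruct HS as (_ & _ & _ & H & _). apply H. Qed.

Lemma mul0s x : z ** x = z.
Proof. destruct HS as (_ & _ & _ & _ & H). apply H. Qed.

Lemma mul_mul_inv_mul a x : a ** x ** inv x ** x = a ** x.
Proof. rewrite <- !mulA, (mulA x), mul_inv_mul. reflexivity. Qed.

Lemma mul_idem_r a e : idem e -> a ** e ** e = a ** e.
Proof. intros He. rewrite <- mulA, He. reflexivity. Qed.

Lemma invK x : inv (inv x) = x.
Proof. symmetry. apply inv_unique; [apply inv_mul_inv | apply mul_inv_mul]. Qed.

Lemma idem_invE e : idem e -> inv e = e.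
Proof. intros He. symmetry. apply inv_unique; rewrite !He; reflexivity. Qed.

Lemma idem_inv_l x : idem (inv x ** x).
Proof. unfold Defs.idem. rewrite mulA, inv_mul_inv. reflexivity. Qed.

Lemma idem_inv_r x : idem (x ** inv x).
Proof. unfold Defs.idem. rewrite mulA, mul_inv_mul. reflexivity. Qed.

Lemma idem_mul e f : idem e -> idem f -> idem (e ** f).
Proof.
  (* By uniqueness of inverses [x = (e f)^-1] equals [f x e]; hence [x] is idempotent,
     so it is its own inverse [e f]. *)
  intros He Hf.
  set (x := inv (e ** f)).
  assert (Hfxe : f ** x ** e ** f ** x ** e = f ** x ** e).
  { transitivity (f ** (x ** (e ** f) ** x) ** e); [rewrite !mulA; reflexivity|].
    unfold x. rewrite inv_mul_inv. reflexivity. }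
  assert (Hx : f ** x ** e = x).
  { apply inv_unique.
    - rewrite !mulA, (mul_idem_r _ Hf), (mul_idem_r _ He), <- (mulA _ e f). apply mul_inv_mul.
    - rewrite !mulA, (mul_idem_r _ He), (mul_idem_r _ Hf). exact Hfxe. }
  assert (Hxx : idem x).
  { unfold Defs.idem. rewrite <- Hx, !mulA. exact Hfxe. }
  assert (E : e ** f = x).
  { rewrite <- (invK (e ** f)). exact (idem_invE Hxx). }
  unfold Defs.idem. rewrite E. exact Hxx.
Qed.

Lemma idem_comm e f : idem e -> idem f -> e ** f = f ** e.
Proof.
  intros He Hf.
  pose proof (idem_mul He Hf) as Hef. pose proof (idem_mul Hf He) as Hfe.
  rewrite <- (idem_invE Hef). symmetry. apply inv_unique.
  - rewrite !mulA, (mul_idem_r _ Hf), (mul_idem_r _ He), <- (mulA (e ** f)). exact Hef.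
  - rewrite !mulA, (mul_idem_r _ He), (mul_idem_r _ Hf), <- (mulA (f ** e)). exact Hfe.
Qed.

Lemma mul_inv_rev_mul s t : s ** t ** (inv t ** inv s) ** (s ** t) = s ** t.
Proof.
  transitivity (s ** ((t ** inv t) ** (inv s ** s)) ** t); [rewrite !mulA; reflexivity|].
  rewrite (idem_comm (idem_inv_r t) (idem_inv_l s)), !mulA, mul_inv_mul, mul_mul_inv_mul.
  reflexivity.
Qed.

Lemma inv_mul s t : inv (s ** t) = inv t ** inv s.
Proof.
  symmetry. apply inv_unique; [apply mul_inv_rev_mul|].
  pose proof (mul_inv_rev_mul (inv t) (inv s)) as H. rewrite !invK in H. exact H.
Qed.

Lemma nle_mul_idem_r t e : idem e -> nle (t ** e) t.
Proof.
  intros He. unfold Defs.nle. rewrite inv_mul, (idem_invE He).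
  transitivity (t ** (inv t ** t ** e) ** e).
  - rewrite !mulA, mul_inv_mul, (mul_idem_r _ He). reflexivity.
  - rewrite <- (idem_comm He (idem_inv_l t)), !mulA. reflexivity.
Qed.

Lemma nle_refl s : nle s s.
Proof. unfold Defs.nle. rewrite mulA, mul_inv_mul. reflexivity. Qed.

Lemma nle_trans s t u : nle s t -> nle t u -> nle s u.
Proof.
  intros Hst Htu. unfold Defs.nle in Hst, Htu. rewrite Hst. rewrite Htu at 1. rewrite <- mulA.
  apply nle_mul_idem_r, idem_mul; apply idem_inv_l.
Qed.

Lemma nleE_l s t : nle s t -> s = s ** inv s ** t.
Proof.
  intros H. unfold Defs.nle in H.
  assert (Hinv : inv s = inv s ** s ** inv t).
  { rewrite H at 1. rewrite inv_mul, (idem_invE (idem_inv_l s)). reflexivity. }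
  rewrite Hinv, !mulA, mul_inv_mul. rewrite H at 2.
  transitivity (t ** ((inv t ** t) ** (inv s ** s))).
  - rewrite !mulA, mul_inv_mul, <- mulA. exact H.
  - rewrite (idem_comm (idem_inv_l t) (idem_inv_l s)), !mulA. reflexivity.
Qed.

Lemma nle_inv s t : nle s t -> nle (inv s) (inv t).
Proof.
  intros H. apply nleE_l in H. rewrite H, inv_mul, (idem_invE (idem_inv_r s)).
  apply nle_mul_idem_r, idem_inv_r.
Qed.

Lemma nle_mul_idem_l t e : idem e -> nle (e ** t) t.
Proof.
  intros He. rewrite <- (invK (e ** t)). rewrite <- (invK t) at 2. apply nle_inv.
  rewrite inv_mul, (idem_invE He). apply nle_mul_idem_r, He.
Qed.

Lemma nle_mul s t u v : nle s t -> nle u v -> nle (s ** u) (t ** v).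
Proof.
  intros Hst Huv. apply nleE_l in Hst. unfold Defs.nle in Huv. rewrite Hst, Huv.
  replace (s ** inv s ** t ** (v ** (inv u ** u)))
    with (s ** inv s ** (t ** v ** (inv u ** u))) by (rewrite !mulA; reflexivity).
  apply nle_trans with (t ** v ** (inv u ** u)).
  - apply nle_mul_idem_l, idem_inv_r.
  - apply nle_mul_idem_r, idem_inv_l.
Qed.

Lemma nle_idem s e : nle s e -> idem e -> idem s.
Proof. intros H He. unfold Defs.nle in H. rewrite H. apply idem_mul; [exact He | apply idem_inv_l]. Qed.

Lemma nle_zero s : nle s z -> s = z.
Proof. intros H. unfold Defs.nle in H. rewrite H. apply mul0s. Qed.

Definition principal (s : S) : S -> Prop := downset (fun x => In x [s]).

Definition down_closed (X : S -> Prop) : Prop := forall b c, X b -> nle c b -> X c.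

Lemma principalP a c : principal a c <-> nle c a.
Proof.
  split.
  - intros [y [[<- | []] H]]. exact H.
  - intros H. exists a. split; [left; reflexivity | exact H].
Qed.

Lemma principal_inD s : inD (principal s).
Proof.
  exists [s]. split; [discriminate | split; [|reflexivity]].
  intros a b [<- | []] [<- | []]. split; [apply idem_inv_l | apply idem_inv_r].
Qed.

Lemma principal_zero : principal z = zeroD z.
Proof.
  apply pred_ext. intros x. unfold zeroD. rewrite principalP. split.
  - apply nle_zero.
  - intros ->. apply nle_refl.
Qed.

Lemma downset_down_closed X : down_closed (downset X).
Proof. intros b c [x [Hx Hbx]] Hcb. exists x. split; [exact Hx | exact (nle_trans Hcb Hbx)]. Qed.

Lemma inD_down_closed A : inD A -> down_closed A.
Proof. intros [l [_ [_ ->]]]. apply downset_down_closed. Qed.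

Lemma setinv_down_closed X : down_closed X -> down_closed (setinv X).
Proof.
  intros HX b c [a [Ha ->]] Hc. exists (inv c). split; [|symmetry; apply invK].
  apply (HX a); [exact Ha|]. rewrite <- (invK a). apply nle_inv, Hc.
Qed.

Lemma principal_sub X s : down_closed X -> X s -> subset (principal s) X.
Proof. intros HX Hs c Hc. apply principalP in Hc. exact (HX s c Hs Hc). Qed.

Lemma principal_mono s t : nle s t -> subset (principal s) (principal t).
Proof. intros H. apply principal_sub; [apply downset_down_closed | apply principalP, H]. Qed.

Lemma downset_cons a l :
  downset (fun x => In x (a :: l)) = setunion (principal a) (downset (fun x => In x l)).
Proof.
  apply pred_ext. intros x. split.
  - intros [y [[<- | Hy] Hxy]].
    + left. apply principalP, Hxy.
    + right. exists y. split; assumption.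
  - intros [Hx | [y [Hy Hxy]]].
    + exists a. split; [left; reflexivity | apply principalP, Hx].
    + exists y. split; [right; exact Hy | exact Hxy].
Qed.

(* [X = A B] satisfies [X X ⊆ X] because [(a b) q = a (b q)] with [b q <= b] for the
   idempotent [q], and [X ⊆ X X] because each [x = x x]. *)
Lemma idemD_setmul A B :
  down_closed B -> (forall x, setmul A B x -> idem x) -> idemD (setmul A B).
Proof.
  intros HB Hid. apply pred_ext. intros x. split.
  - intros [p [q [[a [b [Ha [Hb ->]]]] [Hq ->]]]]. exists a, (b ** q).
    split; [exact Ha | split; [|symmetry; apply mulA]].
    apply (HB b); [exact Hb | apply nle_mul_idem_r, Hid, Hq].
  - intros Hx. exists x, x. split; [exact Hx | split; [exact Hx|]].
    symmetry. apply Hid, Hx.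
Qed.

Lemma compatibleD_downset l1 l2 :
  (forall a b, In a l1 -> In b l2 -> compatible a b) ->
  compatibleD (downset (fun x => In x l1)) (downset (fun x => In x l2)).
Proof.
  intros Hc. split; apply idemD_setmul.
  - apply downset_down_closed.
  - intros x [p [q [[a [[a' [Ha' Ha]] ->]] [[b' [Hb' Hb]] ->]] ]].
    apply nle_idem with (inv a' ** b'); [apply nle_mul; [apply nle_inv|]; assumption|].
    apply (Hc a' b' Ha' Hb').
  - apply setinv_down_closed, downset_down_closed.
  - intros x [p [q [[a' [Ha' Hp]] [[b [[b' [Hb' Hb]] ->]] ->]] ]].
    apply nle_idem with (a' ** inv b'); [apply nle_mul; [|apply nle_inv]; assumption|].
    apply (Hc a' b' Ha' Hb').
Qed.

Lemma filter_up F x y : filter F -> F x -> nle x y -> F y.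
Proof. intros [_ [E _]] Hx Hxy. rewrite E. exists x. split; assumption. Qed.

Lemma filterD_inD P A : filterD P -> P A -> inD A.
Proof. intros [_ [E _]] HA. rewrite E in HA. apply HA. Qed.

Lemma filterD_up P A B : filterD P -> inD A -> P B -> subset B A -> P A.
Proof. intros [_ [E _]] HA HB Hsub. rewrite E. split; [exact HA | exists B; split; assumption]. Qed.

(* [{a_1, ..., a_m}^down] is the compatible join of the [a_i^down]. *)
Lemma prime_filterD_downset P l :
  prime_filterD P -> l <> [] -> (forall a b, In a l -> In b l -> compatible a b) ->
  P (downset (fun x => In x l)) -> exists a, In a l /\ P (principal a).
Proof.
  intros [_ [_ Hprime]]. induction l as [|a l IH]; intros Hne Hc HP; [congruence|].
  destruct l as [|b l].
  - exists a. split; [left; reflexivity | exact HP].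
  - rewrite downset_cons in HP.
    assert (Hc' : forall x y, In x (b :: l) -> In y (b :: l) -> compatible x y)
      by (intros x y Hx Hy; apply Hc; right; assumption).
    assert (Hl_inD : inD (downset (fun x => In x (b :: l))))
      by (exists (b :: l); split; [discriminate | split; [exact Hc' | reflexivity]]).
    assert (Hcompat : compatibleD (principal a) (downset (fun x => In x (b :: l)))).
    { apply compatibleD_downset. intros x y [<- | []] Hy. apply Hc; [left | right]; auto. }
    destruct (Hprime _ _ (principal_inD a) Hl_inD Hcompat HP) as [Ha | Hl].
    + exists a. split; [left; reflexivity | exact Ha].
    + destruct (IH ltac:(discriminate) Hc' Hl) as [c [Hcl Hc1]].
      exists c. split; [right; exact Hcl | exact Hc1].
Qed.

Lemma prime_filterD_principal P A : prime_filterD P -> P A -> exists a, A a /\ P (principal a).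
Proof.
  intros HP HA. destruct (filterD_inD (proj1 HP) HA) as [l [Hne [Hc ->]]].
  destruct (prime_filterD_downset HP Hne Hc HA) as [a [Hal Ha]].
  exists a. split; [exists a; split; [exact Hal | apply nle_refl] | exact Ha].
Qed.

Definition meeting (F : S -> Prop) : (S -> Prop) -> Prop :=
  fun A => inD A /\ exists x, A x /\ F x.

Definition principals_in (P : (S -> Prop) -> Prop) : S -> Prop :=
  fun s => P (principal s).

Lemma meeting_principal F s : F s -> meeting F (principal s).
Proof.
  intros Hs. split; [apply principal_inD | exists s; split; [apply principalP, nle_refl | exact Hs]].
Qed.

Lemma meeting_filterD F : filter F -> filterD (meeting F).
Proof.
  intros [[a Ha] [_ Hdir]]. split; [|split].
  - exists (principal a). apply meeting_principal, Ha.
  - apply pred_ext. intros A. split.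
    + intros HA. split; [apply HA | exists A; split; [exact HA | intros x Hx; exact Hx]].
    + intros [HA [B [[_ [x [Bx Fx]]] Hsub]]]. split; [exact HA | exists x; split; auto].
  - intros A B [HA [x [Ax Fx]]] [HB [y [By Fy]]].
    destruct (Hdir x y Fx Fy) as [c [Fc [Hcx Hcy]]].
    exists (principal c). split; [apply meeting_principal, Fc | split].
    + apply principal_sub; [apply inD_down_closed, HA | exact (inD_down_closed HA Ax Hcx)].
    + apply principal_sub; [apply inD_down_closed, HB | exact (inD_down_closed HB By Hcy)].
Qed.

Lemma meeting_prime F : proper_filter F -> prime_filterD (meeting F).
Proof.
  intros [HF Hz]. split; [apply meeting_filterD, HF | split].
  - intros [_ [x [Hx Fx]]]. unfold zeroD in Hx. subst x. contradiction.
  - intros A B HA HB _ [_ [x [[Ax | Bx] Fx]]].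
    + left. split; [exact HA | exists x; split; assumption].
    + right. split; [exact HB | exists x; split; assumption].
Qed.

Lemma principals_in_proper P : prime_filterD P -> proper_filter (principals_in P).
Proof.
  intros HP. pose proof HP as (HD & Hz & _). pose proof HD as ([A HA] & _ & Hdir).
  split; [split; [|split] |].
  - destruct (prime_filterD_principal HP HA) as [a [_ Ha]]. exists a. exact Ha.
  - apply pred_ext. intros s. split.
    + intros Hs. exists s. split; [exact Hs | apply nle_refl].
    + intros [x [Hx Hxs]]. exact (filterD_up HD (principal_inD s) Hx (principal_mono Hxs)).
  - intros a b Ha Hb. destruct (Hdir _ _ Ha Hb) as [C [HC [HCa HCb]]].
    destruct (prime_filterD_principal HP HC) as [c [Cc Hc]].
    exists c. split; [exact Hc | split; apply principalP; auto].
  - unfold principals_in. rewrite principal_zero. exact Hz.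
Qed.

Lemma principals_in_meeting F : filter F -> principals_in (meeting F) = F.
Proof.
  intros HF. apply pred_ext. intros s. split.
  - intros [_ [x [Hx Fx]]]. apply principalP in Hx. exact (filter_up HF Fx Hx).
  - apply meeting_principal.
Qed.

Lemma meeting_principals_in P : prime_filterD P -> meeting (principals_in P) = P.
Proof.
  intros HP. apply pred_ext. intros A. split.
  - intros [HA [x [Ax Px]]].
    exact (filterD_up (proj1 HP) HA Px (principal_sub (inD_down_closed HA) Ax)).
  - intros HA. split; [exact (filterD_inD (proj1 HP) HA) | exact (prime_filterD_principal HP HA)].
Qed.

Lemma meeting_subset F G : filter G -> subset F G <-> (forall A, meeting F A -> meeting G A).
Proof.
  intros HG. split.
  - intros Hsub A [HA [x [Ax Fx]]]. split; [exact HA | exists x; split; auto].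
  - intros H s Fs. destruct (H _ (meeting_principal Fs)) as [_ [x [Hx Gx]]].
    apply principalP in Hx. exact (filter_up HG Gx Hx).
Qed.

End InverseSemigroup.

Theorem lemma2p14 (S : Type) (mul : S -> S -> S) (inv : S -> S) (z : S)
  (HS : inverse_semigroup_with_zero mul inv z) :
  exists (f : (S -> Prop) -> ((S -> Prop) -> Prop))
         (g : ((S -> Prop) -> Prop) -> (S -> Prop)),
    (forall F, proper_filter mul inv z F -> prime_filterD mul inv z (f F)) /\
    (forall P, prime_filterD mul inv z P -> proper_filter mul inv z (g P)) /\
    (forall F, proper_filter mul inv z F -> g (f F) = F) /\
    (forall P, prime_filterD mul inv z P -> f (g P) = P) /\
    (forall F G, proper_filter mul inv z F -> proper_filter mul inv z G ->
       (subset F G <-> (forall A, f F A -> f G A))).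
Proof.
  exists (meeting mul inv), (principals_in mul inv).
  split; [|split; [|split; [|split]]].
  - apply (meeting_prime HS).
  - apply (principals_in_proper HS).
  - intros F [HF _]. apply (principals_in_meeting HS HF).
  - apply (meeting_principals_in HS).
  - intros F G _ [HG _]. apply (meeting_subset HS F HG).
Qed.
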